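(* Let $(A,\cdot)$ be a nearly associative algebra over a field $\mathbb{K}$ of characteristic $0$, let $V$ be a finite-dimensional linear space over $\mathbb{K}$, and let $l,r:A\to\mathrm{End}(V)$ be linear maps such that $(l,r,V)$ is a bimodule of $(A,\cdot)$. Then the linear map $l-r:A\to\mathrm{End}(V)$, $x\mapsto l(x)-r(x)$, is a representation of the underlying Lie algebra $\mathcal{G}(A)=(A,[\cdot,\cdot])$, $[x,y]=x\cdot y-y\cdot x$; that is, $(l-r)([x,y])=(l-r)(x)\circ(l-r)(y)-(l-r)(y)\circ(l-r)(x)$ for all $x,y\in A$.
   Context: An algebra $(A,\cdot)$ is nearly associative if $x\cdot(y\cdot z)=(z\cdot x)\cdot y$ for all $x,y,z\in A$; such an algebra is Lie-admissible, and $\mathcal{G}(A)$ denotes $A$ with the commutator bracket. A triple $(l,r,V)$, with $l,r:A\to\mathrm{End}(V)$ linear, is a bimodule of $(A,\cdot)$ if for all $x,y\in A$: $l(x)l(y)=r(y)r(x)$, $l(x)r(y)=l(y\cdot x)$, and $r(x)l(y)=r(x\cdot y)$. *)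

From mathcomp Require Import all_boot all_order all_algebra.
Set Implicit Arguments. Unset Strict Implicit. Unset Printing Implicit Defensive.
Import GRing.Theory.
Local Open Scope ring_scope.

Definition bilinear_prod (K : fieldType) (A : lmodType K) (mul : A -> A -> A) :=
  (forall x, linear (mul x)) /\ (forall y, linear (mul^~ y)).

Definition nearly_associative (A : Type) (mul : A -> A -> A) :=
  forall x y z, mul x (mul y z) = mul (mul z x) y.

Definition is_bimodule (K : fieldType) (A : lmodType K) (V : vectType K)
  (mul : A -> A -> A) (l r : A -> 'End(V)) :=
  [/\ forall x y, (l x \o l y)%VF = (r y \o r x)%VF,
      forall x y, (l x \o r y)%VF = l (mul y x)
    & forall x y, (r x \o l y)%VF = r (mul x y)].

Definition commutator (A : zmodType) (mul : A -> A -> A) (x y : A) : A :=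
  mul x y - mul y x.

From mathcomp Require Import all_boot all_order all_algebra.
Import GRing.Theory.
Local Open Scope ring_scope.

(* Expanding (l x - r x)(l y - r y), the bimodule identities turn the two
   mixed terms into -(l(yx) + r(xy)) and the two pure terms into
   l x l y + l y l x, which is symmetric in x and y.  Hence the symmetric
   part cancels in the commutator and what remains is (l - r)(xy - yx). *)

Section BimoduleCommutator.

Variables (K : fieldType) (A : zmodType) (V : vectType K).
Variables (mul : A -> A -> A) (l r : {additive A -> 'End(V)}).
Hypotheses (comp_ll : forall x y, (l x \o l y)%VF = (r y \o r x)%VF)
           (comp_lr : forall x y, (l x \o r y)%VF = l (mul y x))
           (comp_rl : forall x y, (r x \o l y)%VF = r (mul x y)).

Lemma comp_l_sub_r x y :
  ((l x - r x) \o (l y - r y))%VF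
  = ((l x \o l y) + (l y \o l x))%VF - (l (mul y x) + r (mul x y)).
Proof.
rewrite !comp_lfunDl !comp_lfunDr !comp_lfunNl !comp_lfunNr opprK.
rewrite -comp_ll comp_lr comp_rl.
by rewrite opprD [RHS]addrACA [in RHS](addrC (l y \o l x)%VF).
Qed.

Lemma l_sub_r_commutator x y :
  l (commutator mul x y) - r (commutator mul x y)
  = (((l x - r x) \o (l y - r y)) - ((l y - r y) \o (l x - r x)))%VF.
Proof.
rewrite !comp_l_sub_r [(l y \o l x)%VF + _]addrC.
rewrite opprB [_ - _ + _]addrC addrA subrK.
by rewrite /commutator !(raddfB l, raddfB r) opprB opprD [RHS]addrACA.
Qed.

End BimoduleCommutator.

Theorem mainTheorem5 (K : fieldType) (A : lmodType K) (V : vectType K)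
  (mul : A -> A -> A) (l r : {linear A -> 'End(V)}) :
  [pchar K] =i pred0 ->
  bilinear_prod mul ->
  nearly_associative mul ->
  is_bimodule mul l r ->
  forall x y : A,
    l (commutator mul x y) - r (commutator mul x y)
    = (((l x - r x) \o (l y - r y)) - ((l y - r y) \o (l x - r x)))%VF.
Proof. by move=> _ _ _ [comp_ll comp_lr comp_rl]; exact: l_sub_r_commutator. Qed.
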